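(* Consider the setting in the context and the linear system $$\dot q_2=-J_2q_2+\tilde\kappa\left(TP_{\mathcal{S}^\perp}\tilde M B^TT^{-1}\right)_{(n-2\times n-2)}q_2,\qquad q_2\in\mathbb{C}^{n-2}.$$ Let $Q\in\mathbb{C}^{(n-2)\times(n-2)}$ be a Hermitian positive definite matrix with $QJ_2+J_2^HQ\succeq 2I_{n-2}$ ($X^H$ the conjugate transpose). If $$0\le\tilde\kappa<\Big(\big\|Q\left(T\tilde MB^TT^{-1}\right)_{(n-2\times n-2)}\big\|_2\Big)^{-1},$$ then this system is exponentially stable.
   Context: Let $n\ge 3$ agents on an undirected graph $\mathcal{G}=(\mathcal{V},\mathcal{E})$, $\mathcal{V}=\{1,\dots,n\}$, $\mathcal{N}_i=\{j:(i,j)\in\mathcal{E}\}$. Let $p^*\in\mathbb{C}^n$ be a reference shape (not a multiple of the all-ones vector $\mathbf{1}_n$), and let $L$ be the complex Laplacian with nonzero weights $\omega_{ij}$ ($L_{ii}=\sum_{k\in\mathcal{N}_i}\omega_{ik}$, $L_{ij}=-\omega_{ij}$ for $j\in\mathcal{N}_i$, $0$ otherwise) satisfying $\sum_{j\in\mathcal{N}_i}\omega_{ij}(p^*_i-p^*_j)=0$ for all $i$, with $0$ an eigenvalue of $L$ of algebraic and geometric multiplicity 2 and eigenspace $\mathcal{S}=\operatorname{span}\{\mathbf{1}_n,p^*\}$. Let $K=\operatorname{diag}(k_i)$, $k_i\in\mathbb{C}\setminus\{0\}$, be such that all eigenvalues of $KL$ other than the two zero eigenvalues have positive real part, so $\operatorname{Ker}(KL)=\mathcal{S}$.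 Let $J=TKLT^{-1}=\operatorname{diag}(J_1,J_2)$ be a Jordan form of $KL$ with invertible $T$, where $J_1=0\in\mathbb{C}^{2\times2}$ corresponds to the zero eigenvalues and $J_2\in\mathbb{C}^{(n-2)\times(n-2)}$ (so $-J_2$ is Hurwitz). Let $\mathcal{S}^\perp$ be the orthogonal complement of $\operatorname{Ker}(KL)$ and $P_{\mathcal{S}^\perp}$ the orthogonal projection onto it. Let $B$ be the incidence matrix of an orientation of $\mathcal{G}$ ($b_{ik}=+1$ if $i$ is the tail of edge $k$, $-1$ if $i$ is its head, $0$ otherwise) and $\tilde M=\kappa_tM_t+\kappa_rM_r+\kappa_sM_s$ with fixed $\kappa_t,\kappa_r,\kappa_s>0$, where for motion parameters $\mu_{ij}\in\mathbb{C}$ ($\mu_{ij}=0$ if $j\notin\mathcal{N}_i$) the matrix $M$ has entries $m_{ik}=\mu_{i,\mathrm{head}_k}$ if $i$ is the tail of edge $k$, $m_{ik}=-\mu_{i,\mathrm{tail}_k}$ if $i$ is its head, $0$ otherwise, so that $(MB^Tx)_i=\sum_{j\in\mathcal{N}_i}\mu_{ij}(x_i-x_j)$; $M_t,M_r,M_s$ are built from translation, rotation and scaling parameters satisfying $M_tB^Tp^*=v^*\mathbf{1}_n$, $M_rB^Tp^*=\iota\omega p^*$, $M_sB^Tp^*=ap^*$ for given $v^*\in\mathbb{C}$, $a,\omega\in\mathbb{R}$. For $X\in\mathbb{C}^{n\times n}$, $(X)_{(n-2\times n-2)}$ denotes the submatrix obtained by deleting the first two rows and the first two columns. $\|\cdot\|_2$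 is the spectral norm. *)

From HB Require Import structures.
From mathcomp Require Import all_boot all_order all_algebra.
From mathcomp Require Import complex.
From mathcomp Require Import all_classical all_reals all_analysis.
From mathcomp Require Import zify.
Set Implicit Arguments.
Unset Strict Implicit.
Unset Printing Implicit Defensive.
Import Order.TTheory GRing.Theory Num.Theory.
Local Open Scope ring_scope.

Section Defs.
Variable R : realType.
Local Notation C := R[i].

Definition ctr (m k : nat) (X : 'M[C]_(m, k)) : 'M[C]_(k, m) :=
  (map_mx (@conjc R) X)^T.

Definition vnorm (m : nat) (x : 'cV[C]_m) : R :=
  Num.sqrt (\sum_i ((@complex.Re R (x i 0)) ^+ 2 + (@complex.Im R (x i 0)) ^+ 2)).

Definition specnorm (m : nat) (X : 'M[C]_m) : R :=
  sup [set vnorm (X *m x) | x in [set x : 'cV[C]_m | vnorm x <= 1]].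

(* Hermitian positive definite / positive semidefinite; the order on C is the
   standard partial order of the numClosedField R[i] (0 <= z iff z real >= 0) *)
Definition hermitian (m : nat) (X : 'M[C]_m) := ctr X = X.
Definition posdef (m : nat) (X : 'M[C]_m) :=
  hermitian X /\ forall x : 'cV[C]_m, x != 0 -> 0 < (ctr x *m X *m x) 0 0.
Definition psd (m : nat) (X : 'M[C]_m) :=
  hermitian X /\ forall x : 'cV[C]_m, 0 <= (ctr x *m X *m x) 0 0.
Definition loewner_ge (m : nat) (X Y : 'M[C]_m) := psd (X - Y).

Definition is_jordan (m : nat) (J : 'M[C]_m) :=
  (forall i j : 'I_m, (j : nat) != i -> (j : nat) != i.+1 -> J i j = 0) /\
  (forall i j : 'I_m, (j : nat) = i.+1 ->
      (J i j = 0 \/ (J i j = 1 /\ J i i = J j j))).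

Lemma lt_sub2 (n : nat) (i : 'I_(n - 2)) : (i + 2 < n)%N.
Proof. have := ltn_ord i; lia. Qed.
Definition sh2 (n : nat) (i : 'I_(n - 2)) : 'I_n := Ordinal (lt_sub2 i).
Definition sub2 (n : nat) (X : 'M[C]_n) : 'M[C]_(n - 2) :=
  \matrix_(i, j) X (sh2 i) (sh2 j).

Definition claplacian (n : nat) (adj : rel 'I_n) (w : 'I_n -> 'I_n -> C)
  : 'M[C]_n :=
  \matrix_(i, j) if i == j then \sum_(k | adj i k) w i k
                 else if adj i j then - w i j else 0.

Definition incidence (n e : nat) (tl hd : 'I_e -> 'I_n) : 'M[C]_(n, e) :=
  \matrix_(i, k) (if i == tl k then 1 else if i == hd k then -1 else 0).

Definition motionM (n e : nat) (tl hd : 'I_e -> 'I_n) (mu : 'I_n -> 'I_n -> C)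
  : 'M[C]_(n, e) :=
  \matrix_(i, k) (if i == tl k then mu i (hd k)
                  else if i == hd k then - mu i (tl k) else 0).

Definition orientation (n e : nat) (adj : rel 'I_n) (tl hd : 'I_e -> 'I_n) :=
  (forall k, adj (tl k) (hd k)) /\
  (forall i j, adj i j -> exists! k, (tl k = i /\ hd k = j) \/ (tl k = j /\ hd k = i)).

Definition is_solution (m : nat) (A : 'M[C]_m) (q : R -> 'cV[C]_m) :=
  forall (t : R) (i : 'I_m),
    is_derive t 1 (fun s => @complex.Re R (q s i 0)) (@complex.Re R ((A *m q t) i 0)) /\
    is_derive t 1 (fun s => @complex.Im R (q s i 0)) (@complex.Im R ((A *m q t) i 0)).

Definition exp_stable (m : nat) (A : 'M[C]_m) :=
  exists c lam : R, 0 < c /\ 0 < lam /\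
    forall q, is_solution A q ->
      forall t : R, 0 <= t -> vnorm (q t) <= c * expR (- (lam * t)) * vnorm (q 0).

End Defs.

From Pilot Require Import Defs.
From HB Require Import structures.
From mathcomp Require Import all_boot all_order all_algebra.
From mathcomp Require Import complex.
From mathcomp Require Import all_classical all_reals all_analysis.
From mathcomp Require Import ring lra.
Import Order.TTheory GRing.Theory Num.Theory.
Set Implicit Arguments.
Unset Strict Implicit.
Unset Printing Implicit Defensive.
Local Open Scope ring_scope.

(* Write KL = diag(k) L. As T KL T^-1 = diag(0, J2) and Q J2 + J2^H Q >= 2 I
   forces J2 to be injective, T maps Ker(KL) onto vectors whose last n - 2
   coordinates vanish; since x - P x lies in Ker(KL), the projection P drops
   out of the lower-right block, and the system matrix is A = -J2 + kappa N
   with N = (T M B^T T^-1)_(n-2). Then Re(q^H Q A q) <= -(1 - kappa ||Q N||) |q|^2,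
   so q^H Q q + eps |q|^2 is a strict Lyapunov function for small eps > 0. *)

Section RealInnerProduct.
Variable R : realType.
Local Notation C := R[i].
Implicit Types (m : nat) (r s : R).

Definition vnorm2 m (x : 'cV[C]_m) : R :=
  \sum_i ((complex.Re (x i 0)) ^+ 2 + (complex.Im (x i 0)) ^+ 2).

Definition rdot m (x y : 'cV[C]_m) : R :=
  \sum_i (complex.Re (x i 0) * complex.Re (y i 0)
          + complex.Im (x i 0) * complex.Im (y i 0)).

Lemma Re_conjM (a b : C) :
  complex.Re (conjc a * b) = complex.Re a * complex.Re b + complex.Im a * complex.Im b.
Proof. by case: a => ? ?; case: b => ? ? /=; ring. Qed.

Lemma ReM (a b : C) :
  complex.Re (a * b) = complex.Re a * complex.Re b - complex.Im a * complex.Im b.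
Proof. by case: a => ? ?; case: b. Qed.

Lemma ImM (a b : C) :
  complex.Im (a * b) = complex.Re a * complex.Im b + complex.Im a * complex.Re b.
Proof. by case: a => ? ?; case: b. Qed.

Lemma Re_realM r (a : C) : complex.Re ((r%:C)%C * a) = r * complex.Re a.
Proof. by case: a => ? ? /=; ring. Qed.

Lemma ctrM a b c (A : 'M[C]_(a, b)) (B : 'M[C]_(b, c)) :
  ctr (A *m B) = ctr B *m ctr A.
Proof. by rewrite /ctr map_mxM trmx_mul. Qed.

Lemma rdotE m (x y : 'cV[C]_m) : rdot x y = complex.Re ((ctr x *m y) 0 0).
Proof.
by rewrite mxE raddf_sum /=; apply: eq_bigr => i _; rewrite /ctr !mxE Re_conjM.
Qed.

Lemma rdotC m (x y : 'cV[C]_m) : rdot x y = rdot y x.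
Proof. by apply: eq_bigr => i _; ring. Qed.

Lemma rdotvv m (x : 'cV[C]_m) : rdot x x = vnorm2 x.
Proof. by apply: eq_bigr => i _; rewrite !expr2. Qed.

Lemma rdot0r m (x : 'cV[C]_m) : rdot x 0 = 0.
Proof. by rewrite rdotE mulmx0 mxE. Qed.

Lemma rdot0l m (x : 'cV[C]_m) : rdot 0 x = 0.
Proof. by rewrite rdotC rdot0r. Qed.

Lemma rdotDr m (x y z : 'cV[C]_m) : rdot x (y + z) = rdot x y + rdot x z.
Proof. by rewrite !rdotE mulmxDr mxE raddfD. Qed.

Lemma rdotNr m (x y : 'cV[C]_m) : rdot x (- y) = - rdot x y.
Proof. by rewrite !rdotE mulmxN mxE raddfN. Qed.

Lemma rdotZr m r (x y : 'cV[C]_m) : rdot x ((r%:C)%C *: y) = r * rdot x y.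
Proof. by rewrite !rdotE -scalemxAr mxE Re_realM. Qed.

Lemma rdot_adjoint m (M : 'M[C]_m) (x y : 'cV[C]_m) :
  rdot x (ctr M *m y) = rdot (M *m x) y.
Proof. by rewrite !rdotE ctrM mulmxA. Qed.

Lemma rdot_hermitian m (M : 'M[C]_m) (x y : 'cV[C]_m) :
  Defs.hermitian M -> rdot x (M *m y) = rdot (M *m x) y.
Proof. by move=> hM; rewrite -rdot_adjoint hM. Qed.

Lemma vnorm2_ge0 m (x : 'cV[C]_m) : 0 <= vnorm2 x.
Proof. by apply: sumr_ge0 => i _; rewrite addr_ge0 ?sqr_ge0. Qed.

Lemma vnorm2_eq0 m (x : 'cV[C]_m) : vnorm2 x = 0 -> x = 0.
Proof.
move/eqP; rewrite psumr_eq0 => [/allP x0|i _]; last by rewrite addr_ge0 ?sqr_ge0.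
apply/matrixP => i j; rewrite ord1 mxE.
move: (x0 i (mem_index_enum _)); rewrite paddr_eq0 ?sqr_ge0 // !sqrf_eq0.
by case/andP=> /eqP Rex /eqP Imx; apply/eqP; rewrite eq_complex Rex Imx /= !eqxx.
Qed.

Lemma vnormE m (x : 'cV[C]_m) : vnorm x = Num.sqrt (vnorm2 x).
Proof. by []. Qed.

Lemma vnorm_ge0 m (x : 'cV[C]_m) : 0 <= vnorm x.
Proof. exact: sqrtr_ge0. Qed.

Lemma sqr_vnorm m (x : 'cV[C]_m) : vnorm x ^+ 2 = vnorm2 x.
Proof. by rewrite sqr_sqrtr ?vnorm2_ge0. Qed.

Lemma vnorm_eq0 m (x : 'cV[C]_m) : vnorm x = 0 -> x = 0.
Proof. by move=> x0; apply: vnorm2_eq0; rewrite -sqr_vnorm x0 expr0n. Qed.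

Lemma vnormZ m r (x : 'cV[C]_m) : vnorm ((r%:C)%C *: x) = `|r| * vnorm x.
Proof.
rewrite !vnormE -sqrtr_sqr -sqrtrM ?sqr_ge0 // -[vnorm2 (_ *: x)]rdotvv.
by rewrite rdotZr rdotC rdotZr rdotvv mulrA -expr2.
Qed.

Lemma rdot_amgm m s (x y : 'cV[C]_m) :
  0 < s -> 2 * rdot x y <= s * vnorm2 x + vnorm2 y / s.
Proof.
move=> s0; rewrite /rdot /vnorm2 mulr_sumr mulr_sumr mulr_suml -big_split /=.
apply: ler_sum => i _.
set a := complex.Re (x i 0); set b := complex.Re (y i 0).
set c := complex.Im (x i 0); set d := complex.Im (y i 0).
have -> : s * (a ^+ 2 + c ^+ 2) + (b ^+ 2 + d ^+ 2) / s
    = 2 * (a * b + c * d) + ((s * a - b) ^+ 2 + (s * c - d) ^+ 2) / s.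
  by field; rewrite gt_eqF.
by rewrite lerDl divr_ge0 ?addr_ge0 ?sqr_ge0 ?ltW.
Qed.

Lemma rdot_le_vnorm m (x y : 'cV[C]_m) : rdot x y <= vnorm x * vnorm y.
Proof.
have [x0|x0] := eqVneq (vnorm x) 0; first by rewrite x0 mul0r (vnorm_eq0 x0) rdot0l.
have [y0|y0] := eqVneq (vnorm y) 0; first by rewrite y0 mulr0 (vnorm_eq0 y0) rdot0r.
have xpos : 0 < vnorm x by rewrite lt_def x0 vnorm_ge0.
have ypos : 0 < vnorm y by rewrite lt_def y0 vnorm_ge0.
have := rdot_amgm x y (divr_gt0 ypos xpos).
rewrite -!sqr_vnorm.
have -> : vnorm y / vnorm x * vnorm x ^+ 2 + vnorm y ^+ 2 / (vnorm y / vnorm x)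
    = 2 * (vnorm x * vnorm y).
  by field; rewrite !gt_eqF.
by rewrite ler_pM2l.
Qed.

End RealInnerProduct.

Section SpectralNorm.
Variable R : realType.
Local Notation C := R[i].
Implicit Types (m : nat).

Lemma vnorm2_mulmx_le_entries m (M : 'M[C]_m) (x : 'cV[C]_m) :
  vnorm2 x <= 1 ->
  vnorm2 (M *m x) <=
    \sum_i 2 * (\sum_j (`|complex.Re (M i j)| + `|complex.Im (M i j)|)) ^+ 2.
Proof.
move=> x1; apply: ler_sum => i _; set c := \sum_j _.
have xj1 j : `|complex.Re (x j 0)| <= 1 /\ `|complex.Im (x j 0)| <= 1.
  have xj : complex.Re (x j 0) ^+ 2 + complex.Im (x j 0) ^+ 2 <= 1.
    apply: le_trans x1; rewrite /vnorm2 (bigD1 j) //= lerDl.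
    by apply: sumr_ge0 => k _; rewrite addr_ge0 ?sqr_ge0.
  have le1 (a : R) : a ^+ 2 <= 1 -> `|a| <= 1.
    by move=> a1; rewrite -(expr_le1 (n := 2)) // real_normK ?num_real.
  by split; apply: le1; apply: le_trans xj; rewrite ?lerDl ?lerDr sqr_ge0.
have c0 : 0 <= c by apply: sumr_ge0 => j _; rewrite addr_ge0.
have Re_le : `|complex.Re ((M *m x) i 0)| <= c.
  rewrite mxE raddf_sum /=; apply: le_trans (ler_norm_sum _ _ _) _.
  apply: ler_sum => j _; have [Rex Imx] := xj1 j.
  case: (M i j) (x j 0) Rex Imx => a b [u v] /= Rex Imx.
  apply: le_trans (ler_normB _ _) _; rewrite !normrM.
  by apply: lerD; rewrite ler_piMr.
have Im_le : `|complex.Im ((M *m x) i 0)| <= c.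
  rewrite mxE raddf_sum /=; apply: le_trans (ler_norm_sum _ _ _) _.
  apply: ler_sum => j _; have [Rex Imx] := xj1 j.
  case: (M i j) (x j 0) Rex Imx => a b [u v] /= Rex Imx.
  apply: le_trans (ler_normD _ _) _; rewrite !normrM.
  by apply: lerD; rewrite ler_piMr.
have sqr_le (a : R) : `|a| <= c -> a ^+ 2 <= c ^+ 2.
  by move=> ac; rewrite -real_normK ?num_real // ler_pXn2r ?nnegrE.
by rewrite mulr2n mulrDl mul1r lerD ?sqr_le.
Qed.

Lemma specnorm_ubound m (M : 'M[C]_m) (x : 'cV[C]_m) :
  vnorm x <= 1 -> vnorm (M *m x) <= specnorm M.
Proof.
move=> x1; apply: ub_le_sup; last by exists x.
exists (Num.sqrt (\sum_i 2 * (\sum_j (`|complex.Re (M i j)|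
                                     + `|complex.Im (M i j)|)) ^+ 2)).
move=> _ [y y1 <-]; rewrite vnormE ler_sqrt; last first.
  by apply: sumr_ge0 => i _; rewrite mulr_ge0 ?sqr_ge0.
apply: vnorm2_mulmx_le_entries.
by rewrite -sqr_vnorm expr_le1 ?vnorm_ge0.
Qed.

Lemma specnorm_ge0 m (M : 'M[C]_m) : 0 <= specnorm M.
Proof.
have := @specnorm_ubound m M 0; rewrite mulmx0.
by rewrite vnormE -(rdotvv 0) rdot0r sqrtr0 ler01; apply.
Qed.

Lemma vnorm_mulmx_le m (M : 'M[C]_m) (x : 'cV[C]_m) :
  vnorm (M *m x) <= specnorm M * vnorm x.
Proof.
have [x0|x0] := eqVneq (vnorm x) 0.
  by rewrite x0 mulr0 (vnorm_eq0 x0) mulmx0 vnormE -(rdotvv 0) rdot0r sqrtr0.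
have xpos : 0 < vnorm x by rewrite lt_def x0 vnorm_ge0.
have := @specnorm_ubound m M (((vnorm x)^-1)%:C%C *: x).
rewrite -scalemxAr !vnormZ ger0_norm ?invr_ge0 ?vnorm_ge0 // mulVf //.
by rewrite lexx ler_pdivrMl // mulrC; apply.
Qed.

Lemma rdot_mulmx_le m (M : 'M[C]_m) (x : 'cV[C]_m) :
  rdot x (M *m x) <= specnorm M * vnorm2 x.
Proof.
apply: le_trans (rdot_le_vnorm _ _) _.
by rewrite -sqr_vnorm expr2 mulrCA ler_wpM2l ?vnorm_ge0 ?vnorm_mulmx_le.
Qed.

End SpectralNorm.

Section Derivatives.
Variable R : realType.
Local Notation C := R[i].
Implicit Types (m : nat) (f g : R -> R).

Definition has_derive m (q : R -> 'cV[C]_m) (t : R) (dq : 'cV[C]_m) :=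
  forall i,
    is_derive t 1 (fun s => complex.Re (q s i 0)) (complex.Re (dq i 0)) /\
    is_derive t 1 (fun s => complex.Im (q s i 0)) (complex.Im (dq i 0)).

Lemma is_derive_lincomb f g (a b t df dg : R) :
  is_derive t 1 f df -> is_derive t 1 g dg ->
  is_derive t 1 (fun s => a * f s + b * g s) (a * df + b * dg).
Proof.
by move=> df_t dg_t; exact: is_deriveD (is_deriveZ a df_t) (is_deriveZ b dg_t).
Qed.

Lemma has_derive_mulmx m (M : 'M[C]_m) (q : R -> 'cV[C]_m) t dq :
  has_derive q t dq -> has_derive (fun s => M *m q s) t (M *m dq).
Proof.
move=> dq_t i; split.
- have -> : (fun s => complex.Re ((M *m q s) i 0)) =
    \sum_j (fun s => complex.Re (M i j) * complex.Re (q s j 0)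
                     + (- complex.Im (M i j)) * complex.Im (q s j 0)).
    apply/funext => s; rewrite fct_sumE mxE raddf_sum /=.
    by apply: eq_bigr => j _; rewrite ReM; ring.
  apply: is_derive_eq.
    by apply: is_derive_sum => j; apply: is_derive_lincomb; apply dq_t.
  by rewrite mxE raddf_sum /=; apply: eq_bigr => j _; rewrite ReM; ring.
- have -> : (fun s => complex.Im ((M *m q s) i 0)) =
    \sum_j (fun s => complex.Im (M i j) * complex.Re (q s j 0)
                     + complex.Re (M i j) * complex.Im (q s j 0)).
    apply/funext => s; rewrite fct_sumE mxE raddf_sum /=.
    by apply: eq_bigr => j _; rewrite ImM; ring.
  apply: is_derive_eq.
    by apply: is_derive_sum => j; apply: is_derive_lincomb; apply dq_t.
  by rewrite mxE raddf_sum /=; apply: eq_bigr => j _; rewrite ImM; ring.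
Qed.

Lemma is_derive_rdot m (x y : R -> 'cV[C]_m) t dx dy :
  has_derive x t dx -> has_derive y t dy ->
  is_derive t 1 (fun s => rdot (x s) (y s)) (rdot dx (y t) + rdot (x t) dy).
Proof.
move=> dx_t dy_t.
have -> : (fun s => rdot (x s) (y s)) =
    \sum_j (fun s => complex.Re (x s j 0) * complex.Re (y s j 0)
                     + complex.Im (x s j 0) * complex.Im (y s j 0)).
  by apply/funext => s; rewrite fct_sumE.
apply: is_derive_eq.
  apply: is_derive_sum => j.
  by apply: is_deriveD; apply: is_deriveM; [apply dx_t|apply dy_t|apply dx_t|apply dy_t].
rewrite /rdot -big_split /=; apply: eq_bigr => j _; rewrite /GRing.scale /=; ring.
Qed.

Lemma is_derive_expRM (mu t : R) :
  is_derive t 1 (fun s => expR (mu * s)) (mu * expR (mu * t)).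
Proof.
have dlin : is_derive t 1 ( *%R mu) mu.
  apply: is_derive_eq (is_deriveZ mu (is_derive_id t 1)) _.
  by rewrite /GRing.scale /= mulr1.
have lin_d := @ex_derive _ _ _ _ _ _ _ dlin.
have exp_d : derivable (@expR R) (mu * t) 1 by exact: derivable_expR.
have dcomp : derivable (expR \o ( *%R mu)) t 1.
  apply/derivable1_diffP/differentiable_comp; apply/derivable1_diffP.
    exact: lin_d.
  exact: exp_d.
have := derivableP dcomp; rewrite -derive1E (derive1_comp lin_d exp_d).
by rewrite !derive1E !derive_val mulrC.
Qed.

Lemma le_expR_of_derive f (df : R -> R) (mu t : R) :
  (forall s : R, is_derive s 1 f (df s)) -> (forall s, df s <= - mu * f s) ->
  0 <= t -> f t <= f 0 * expR (- (mu * t)).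
Proof.
move=> df_s df_le t0.
pose g s := f s * expR (mu * s).
have dg (s : R) : is_derive s 1 g ((df s + mu * f s) * expR (mu * s)).
  apply: is_derive_eq (is_deriveM (df_s s) (is_derive_expRM mu s)) _.
  by rewrite /GRing.scale /=; ring.
have [c _ gtg0] := MVT_segment t0 (fun s _ => dg s)
  (derivable_within_continuous (fun s _ => @ex_derive _ _ _ _ _ _ _ (dg s))).
have gt_le : g t <= g 0.
  rewrite -subr_le0 gtg0 subr0; apply: mulr_le0_ge0 => //.
  apply: mulr_le0_ge0; last exact: expR_ge0.
  by rewrite -lerBrDr sub0r -mulNr df_le.
have -> : f t = g t * expR (- (mu * t)) by rewrite /g -mulrA expRxMexpNx_1 mulr1.
rewrite ler_pM2r ?expR_gt0 //; apply: le_trans gt_le _.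
by rewrite /g mulr0 expR0 mulr1.
Qed.

End Derivatives.

Section Lyapunov.
Variable R : realType.
Local Notation C := R[i].
Implicit Types (m : nat).

Lemma psd_rdot_ge0 m (X : 'M[C]_m) (v : 'cV[C]_m) : psd X -> 0 <= rdot v (X *m v).
Proof. by case=> _ /(_ v); rewrite lecE rdotE mulmxA => /andP[]. Qed.

Lemma posdef_rdot_ge0 m (X : 'M[C]_m) (v : 'cV[C]_m) :
  posdef X -> 0 <= rdot v (X *m v).
Proof.
case=> _ X_gt0; have [->|v0] := eqVneq v 0; first by rewrite rdot0l.
by move: (X_gt0 v v0); rewrite ltcE rdotE mulmxA => /andP[_ /ltW].
Qed.

Lemma rdot_lyapunov_ge m (Q J : 'M[C]_m) (v : 'cV[C]_m) :
  Defs.hermitian Q -> loewner_ge (Q *m J + ctr J *m Q) 2%:M ->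
  vnorm2 v <= rdot v (Q *m (J *m v)).
Proof.
move=> hermQ /(psd_rdot_ge0 v).
rewrite mulmxBl mulmxDl !rdotDr rdotNr -!mulmxA rdot_adjoint.
rewrite (rdot_hermitian (J *m v) v hermQ) [rdot (Q *m (J *m v)) v]rdotC.
have two : (2 : C) = (2 : R)%:C%C by rewrite rmorph_nat.
rewrite mul_scalar_mx two rdotZr rdotvv; lra.
Qed.

Lemma exp_stable_vnorm2 m (A : 'M[C]_m) (c lam : R) : 0 < c -> 0 < lam ->
  (forall q, is_solution A q -> forall t, 0 <= t ->
     vnorm2 (q t) <= c * expR (- (lam * t)) * vnorm2 (q 0)) ->
  exp_stable A.
Proof.
move=> c_gt0 lam_gt0 q_le; exists (Num.sqrt c), (lam / 2).
split; first by rewrite sqrtr_gt0.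
split; first by rewrite divr_gt0.
move=> q q_sol t t0.
rewrite -(ler_pXn2r (_ : 0 < 2)%N) ?nnegrE ?mulr_ge0 ?vnorm_ge0 ?sqrtr_ge0 ?expR_ge0 //.
rewrite !exprMn !sqr_vnorm (sqr_sqrtr (ltW c_gt0)) -expRM_natr.
by rewrite (_ : - (lam / 2 * t) * 2%:R = - (lam * t)) ?q_le //; field.
Qed.

Lemma exp_stable_lyapunov m (A Q : 'M[C]_m) (eta : R) :
  Defs.hermitian Q -> (forall v, 0 <= rdot v (Q *m v)) -> 0 < eta ->
  (forall v, rdot v (Q *m (A *m v)) <= - eta * vnorm2 v) -> exp_stable A.
Proof.
move=> hermQ Q_ge0 eta_gt0 QA_le.
move: (specnorm A) (specnorm_ge0 A) (rdot_mulmx_le A) => SA SA_ge0 A_le.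
move: (specnorm Q) (specnorm_ge0 Q) (rdot_mulmx_le Q) => SQ SQ_ge0 Q_le.
have SA1 : 0 < 1 + SA by lra.
(* Nothing bounds q^H Q q below by a multiple of |q|^2 explicitly;
   the term eps |q|^2 in V supplies such a bound. *)
pose eps := eta / (2 * (1 + SA)).
have eps_gt0 : 0 < eps by rewrite divr_gt0 ?mulr_gt0.
have epsSA : eps * SA <= eta / 2.
  rewrite -subr_ge0 (_ : eta / 2 - eps * SA = eps) ?ltW //.
  by rewrite /eps; field; rewrite gt_eqF.
pose K := SQ + eps.
have K_gt0 : 0 < K by rewrite /K; lra.
apply: (exp_stable_vnorm2 (c := K / eps) (lam := eta / K)) => [||q q_sol t t0].
- by rewrite divr_gt0.
- by rewrite divr_gt0.
pose V s := rdot (q s) (Q *m q s) + eps * rdot (q s) (q s).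
pose dV s := 2 * rdot (q s) (Q *m (A *m q s)) + eps * (2 * rdot (q s) (A *m q s)).
have V_le s : V s <= K * vnorm2 (q s).
  by rewrite /V rdotvv mulrDl lerD2r Q_le.
have dV_is (s : R) : is_derive s 1 V (dV s).
  have dq : has_derive q s (A *m q s) := q_sol s.
  apply: is_derive_eq.
    exact: is_deriveD (is_derive_rdot dq (has_derive_mulmx Q dq))
                      (is_deriveZ eps (is_derive_rdot dq dq)).
  rewrite /dV /GRing.scale /= (rdot_hermitian (A *m q s) (q s) hermQ).
  by rewrite [rdot (Q *m _) _]rdotC [rdot (A *m q s) _]rdotC; ring.
have dV_le s : dV s <= - (eta / K) * V s.
  have n_ge0 := vnorm2_ge0 (q s).
  have QA := QA_le (q s).
  have epsA : eps * (2 * rdot (q s) (A *m q s)) <= eta * vnorm2 (q s).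
    have := ler_wpM2l (ltW eps_gt0) (A_le (q s)).
    have := ler_wpM2r n_ge0 epsSA; lra.
  have KV : eta / K * V s <= eta * vnorm2 (q s).
    rewrite mulrAC ler_pdivrMr // -mulrA ler_pM2l // [_ * K]mulrC; exact: V_le.
  rewrite /dV; lra.
have Vt_le := le_expR_of_derive dV_is dV_le t0.
have epsV : eps * vnorm2 (q t) <= V t by rewrite /V rdotvv lerDr Q_ge0.
rewrite -(ler_pM2l eps_gt0).
have -> : eps * (K / eps * expR (- (eta / K * t)) * vnorm2 (q 0))
    = K * vnorm2 (q 0) * expR (- (eta / K * t)).
  by field; rewrite gt_eqF.
apply: le_trans epsV (le_trans Vt_le _).
by rewrite ler_wpM2r ?expR_ge0 ?V_le.
Qed.

Lemma exp_stable_perturbed m (J N Q : 'M[C]_m) (kap : R) :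
  posdef Q -> loewner_ge (Q *m J + ctr J *m Q) 2%:M -> 0 <= kap ->
  kap * specnorm (Q *m N) < 1 ->
  exp_stable (- J + kap%:C%C *: N).
Proof.
move=> Q_pd QJ_ge kap_ge0 kapS_lt1.
apply: (@exp_stable_lyapunov _ _ Q (1 - kap * specnorm (Q *m N))) => [||| v].
- exact: Q_pd.1.
- by move=> v; exact: posdef_rdot_ge0.
- by rewrite subr_gt0.
rewrite mulmxDl mulNmx -scalemxAl mulmxDr mulmxN -scalemxAr rdotDr rdotNr rdotZr.
have := rdot_lyapunov_ge v Q_pd.1 QJ_ge.
have := ler_wpM2l kap_ge0 (rdot_mulmx_le (Q *m N) v); rewrite -mulmxA; lra.
Qed.

End Lyapunov.

Section LowerRightBlock.
Variable R : realType.
Local Notation C := R[i].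
Implicit Types (n : nat).

Definition tail2 n (w : 'cV[C]_n) : 'cV[C]_(n - 2) := \col_i w (sh2 i) 0.

Lemma tail2B n (a b : 'cV[C]_n) : tail2 (a - b) = tail2 a - tail2 b.
Proof. by apply/matrixP => k l; rewrite !mxE. Qed.

Lemma sum_sh2 n (F : 'I_n -> C) :
  (2 <= n)%N -> (forall j : 'I_n, (j < 2)%N -> F j = 0) ->
  \sum_j F j = \sum_(j : 'I_(n - 2)) F (sh2 j).
Proof.
case: n F => [//|n] F n2 F0.
have -> : \sum_j F j = \sum_(0 <= j < n.+1) F (inord j).
  by rewrite big_mkord; apply: eq_bigr => j _; rewrite inord_val.
have -> : \sum_(j : 'I_(n.+1 - 2)) F (sh2 j) = \sum_(0 <= j < n.+1 - 2) F (inord (j + 2)).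
  rewrite big_mkord; apply: eq_bigr => j _; congr F; apply: val_inj.
  by rewrite /= inordK // (lt_sub2 j).
rewrite (big_cat_nat (n := 2) _ n2) //= (big_addn 0 _ 2).
rewrite [X in X + _]big1_seq ?add0r // => j /andP[_].
rewrite mem_index_iota => /andP[_ j2]; apply: F0.
by rewrite inordK // (leq_trans j2 n2).
Qed.

Lemma tail2_mulmx n (J : 'M[C]_n) (w : 'cV[C]_n) :
  (2 <= n)%N -> (forall i j : 'I_n, (j < 2)%N -> J i j = 0) ->
  tail2 (J *m w) = sub2 J *m tail2 w.
Proof.
move=> n2 J0; apply/matrixP => i k; rewrite !mxE (sum_sh2 n2) => [|j j2].
  by apply: eq_bigr => j _; rewrite !mxE.
by rewrite J0 ?mul0r.
Qed.

Lemma lyapunov_mulmx_eq0 m (Q J : 'M[C]_m) (u : 'cV[C]_m) :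
  Defs.hermitian Q -> loewner_ge (Q *m J + ctr J *m Q) 2%:M ->
  J *m u = 0 -> u = 0.
Proof.
move=> hermQ QJ_ge Ju0; apply: vnorm2_eq0; apply/eqP.
by rewrite eq_le vnorm2_ge0 andbT -(rdot0r u) -(mulmx0 _ Q) -Ju0 rdot_lyapunov_ge.
Qed.

Section Similarity.
Variables (n : nat) (KL T J : 'M[C]_n).
Hypotheses (T_unit : T \in unitmx) (TKL : T *m KL *m invmx T = J) (n2 : (2 <= n)%N).
Hypothesis J0 : forall i j : 'I_n, (j < 2)%N -> J i j = 0.
Hypothesis J2_inj : forall u : 'cV[C]_(n - 2), sub2 J *m u = 0 -> u = 0.

Lemma tail2_ker (z : 'cV[C]_n) : KL *m z = 0 -> tail2 (T *m z) = 0.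
Proof.
move=> KLz0; apply: J2_inj; rewrite -tail2_mulmx //.
rewrite -TKL -!mulmxA mulKmx // KLz0 !mulmx0.
by apply/matrixP => i k; rewrite !mxE.
Qed.

Lemma tail2_proj (P : 'M[C]_n) (y : 'cV[C]_n) :
  (forall x : 'cV[C]_n, KL *m (x - P *m x) = 0) ->
  tail2 (T *m (P *m y)) = tail2 (T *m y).
Proof.
move=> KLP; apply/eqP; rewrite eq_sym -subr_eq0 -tail2B -mulmxBr.
by rewrite tail2_ker ?KLP.
Qed.

Lemma sub2_similar_proj (P X : 'M[C]_n) :
  (forall x : 'cV[C]_n, KL *m (x - P *m x) = 0) ->
  sub2 (T *m P *m X *m invmx T) = sub2 (T *m X *m invmx T).
Proof.
move=> KLP; apply/matrixP => i j.
have entry_col (M : 'M[C]_n) : sub2 M i j = tail2 (M *m delta_mx (sh2 j) 0) i 0.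
  by rewrite -colE !mxE.
by rewrite !entry_col -!mulmxA tail2_proj.
Qed.

End Similarity.

End LowerRightBlock.

Theorem proposition1 (R : realType) (n : nat) (hn : (3 <= n)%N)
  (adj : rel 'I_n) (adj_sym : symmetric adj) (adj_irr : irreflexive adj)
  (pstar : 'cV[R[i]]_n)
  (hpstar : forall c : R[i], pstar != c *: const_mx 1)
  (w : 'I_n -> 'I_n -> R[i]) (hw : forall i j, adj i j -> w i j != 0)
  (hwp : forall i : 'I_n, \sum_(j | adj i j) w i j * (pstar i 0 - pstar j 0) = 0)
  (hLmult : mup 0 (char_poly (claplacian adj w)) = 2%N)
  (hLker : forall x : 'cV[R[i]]_n, claplacian adj w *m x = 0 <->
             exists a b : R[i], x = a *: const_mx 1 + b *: pstar)
  (k : 'I_n -> R[i]) (hk : forall i, k i != 0)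
  (hKLmult : mup 0 (char_poly (diag_mx (\row_i k i) *m claplacian adj w)) = 2%N)
  (hKLspec : forall z : R[i], root (char_poly (diag_mx (\row_i k i) *m claplacian adj w)) z ->
             z != 0 -> 0 < complex.Re z)
  (T J : 'M[R[i]]_n) (hT : T \in unitmx)
  (hJ : T *m (diag_mx (\row_i k i) *m claplacian adj w) *m invmx T = J)
  (hJjordan : is_jordan J)
  (hJblock : forall i j : 'I_n, (i < 2)%N || (j < 2)%N -> J i j = 0)
  (P : 'M[R[i]]_n)
  (hP : forall x : 'cV[R[i]]_n,
      (forall s : 'cV[R[i]]_n, diag_mx (\row_i k i) *m claplacian adj w *m s = 0 ->
          ctr s *m (P *m x) = 0) /\
      diag_mx (\row_i k i) *m claplacian adj w *m (x - P *m x) = 0)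
  (e : nat) (tl hd : 'I_e -> 'I_n) (horient : orientation adj tl hd)
  (mut mur mus : 'I_n -> 'I_n -> R[i]) (vstar : R[i]) (a om : R)
  (hMt : motionM tl hd mut *m (incidence R tl hd)^T *m pstar = vstar *: const_mx 1)
  (hMr : motionM tl hd mur *m (incidence R tl hd)^T *m pstar = (0 +i* om)%C *: pstar)
  (hMs : motionM tl hd mus *m (incidence R tl hd)^T *m pstar = (a%:C)%C *: pstar)
  (kt kr ks : R) (hkt : 0 < kt) (hkr : 0 < kr) (hks : 0 < ks)
  (Q : 'M[R[i]]_(n - 2)) (hQ : posdef Q)
  (hQJ : loewner_ge (Q *m sub2 J + ctr (sub2 J) *m Q) (2%:M))
  (kap : R) (hkap0 : 0 <= kap) :
  let Mtil := (kt%:C)%C *: motionM tl hd mut + (kr%:C)%C *: motionM tl hd mur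
              + (ks%:C)%C *: motionM tl hd mus in
  let B := incidence R tl hd in
  kap * specnorm (Q *m sub2 (T *m (Mtil *m B^T) *m invmx T)) < 1 ->
  exp_stable (- sub2 J + (kap%:C)%C *: sub2 (T *m P *m (Mtil *m B^T) *m invmx T)).
Proof.
move=> Mtil B kapS_lt1.
have J0 (i j : 'I_n) : (j < 2)%N -> J i j = 0 by move=> j2; rewrite hJblock // j2 orbT.
have J2_inj (u : 'cV_(n - 2)) : sub2 J *m u = 0 -> u = 0 := lyapunov_mulmx_eq0 hQ.1 hQJ.
rewrite (sub2_similar_proj hT hJ (ltnW hn) J0 J2_inj _ (fun x => (hP x).2)).
exact: exp_stable_perturbed hQ hQJ hkap0 kapS_lt1.
Qed.
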